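(* Let $G$ be a finite group with $Z(G)\neq 1$ and $\mathcal{D}(G/Z(G))=2$. Then $\mathcal{D}(G)-\mathcal{D}(Z(G))\ge 4$.
   Context: $\mathcal{D}(X)$ denotes the number of conjugacy classes of nontrivial subgroups $Y$ of the finite group $X$ with $N_X(Y)\neq Y$. $Z(G)$ is the center of $G$. *)

From mathcomp Require Import all_boot all_fingroup all_solvable.
Set Implicit Arguments. Unset Strict Implicit. Unset Printing Implicit Defensive.
Local Open Scope group_scope.

Definition nsn_subgroups (gT : finGroupType) (X : {set gT}) : {set {set gT}} :=
  [set Y : {set gT} | [&& group_set Y, Y \subset X, Y != 1 & 'N_X(Y) != Y]].

Definition calD (gT : finGroupType) (X : {set gT}) : nat :=
  #|[set Y :^: X | Y in nsn_subgroups X]|.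

From mathcomp Require Import all_boot all_fingroup all_solvable.
Set Implicit Arguments. Unset Strict Implicit. Unset Printing Implicit Defensive.
Local Open Scope group_scope.

(* Write Z for Z(G). If every x in G \ Z had Z \subset <[x]>, then for a prime p
   dividing |Z| every p'-element of G would be central, so G / Z would be a p-group;
   it is not cyclic (otherwise G is abelian and D(G / Z) = 0), so it would have three
   distinct proper nontrivial normal subgroups, whence D(G / Z) >= 3. Hence some
   x \notin Z has Z \not\subset <[x]>; <[x]> is normalized by Z, so it is not
   self-normalizing. Every nontrivial subgroup of Z is normal in G, hence alone in its
   class, which yields at least D(Z) + 1 classes of subgroups inside Z (Z included);
   the preimages of two nonconjugate subgroups of G / Z, which contain Z, and <[x]>,
   which does not, give three more classes. *)

Section PGroups.

Variable gT : finGroupType.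
Implicit Types (A : {set gT}) (G H M : {group gT}).

Lemma conjugates_normal G A : G \subset 'N(A) -> A :^: G = [set A].
Proof.
move=> nAG; apply/setP=> B; rewrite inE.
by apply/imsetP/eqP=> [[g Gg ->] | ->]; [exact: (normsP nAG) | exists 1; rewrite ?conjsg1].
Qed.

Lemma calD1 : calD [1 gT] = 0.
Proof.
apply/eqP; rewrite cards_eq0 imset_eq0; apply/eqP/setP=> Y; rewrite !inE.
apply/negbTE; apply/and4P=> [[/andP[Y1 _] sY1 ntY _]].
by rewrite eqEsubset sY1 sub1set Y1 in ntY.
Qed.

Lemma normal_nsn G A :
  group_set A -> A <| G -> A \proper G -> A != 1 -> A \in nsn_subgroups G.
Proof.
move=> gA /andP[sAG nAG] pAG ntA; rewrite inE gA sAG ntA (setIidPl nAG) /=.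
by apply: contraTneq pAG => ->; rewrite properxx.
Qed.

Lemma calD_gt2_normal H (A B C : {group gT}) :
  A <| H -> B <| H -> C <| H -> A \proper H -> B \proper H -> C \proper H ->
  A :!=: 1 -> B :!=: 1 -> C :!=: 1 -> A :!=: B -> B :!=: C -> C :!=: A ->
  2 < calD H.
Proof.
move=> nAH nBH nCH pAH pBH pCH ntA ntB ntC neAB neBC neCA.
apply/card_gt2P; exists (A :^: H), (B :^: H), (C :^: H); split.
  by split; apply: imset_f; apply: normal_nsn; rewrite ?groupP.
by rewrite !conjugates_normal ?normal_norm // !(inj_eq set1_inj).
Qed.

Lemma noncyclic_two_maximal H :
  ~~ cyclic H -> exists M1 M2 : {group gT}, [/\ maximal M1 H, maximal M2 H & M1 :!=: M2].
Proof.
move=> ncH; have [e1H | [M1 maxM1 _]] := maximal_exists (sub1G H).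
  by rewrite -e1H cyclic1 in ncH.
have [_ [x Hx M1x']] := properP (maxgroupp maxM1).
have sxH : <[x]> \subset H by rewrite cycle_subG.
have [exH | [M2 maxM2 sxM2]] := maximal_exists sxH.
  by rewrite -exH cycle_cyclic in ncH.
exists M1, M2; split=> //; apply: contraNneq M1x' => ->.
by rewrite -cycle_subG.
Qed.

Lemma pgroup_maximal_der1 (p : nat) H M :
  p.-group H -> maximal M H -> H^`(1) \subset M.
Proof.
move=> pH maxM; have nMH := normal_norm (p_maximal_normal pH maxM).
have ntH : H :!=: 1.
  by apply: contraTneq (maxgroupp maxM) => ->; rewrite properE sub1G andbF.
have [p_pr _ _] := pgroup_pdiv pH ntH.
apply: (der1_min nMH (cyclic_abelian (prime_cyclic _))).
by rewrite (card_quotient nMH) (p_maximal_index pH maxM).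
Qed.

Lemma pgroup_TI_maximal_abelian (p : nat) H M1 M2 :
  p.-group H -> maximal M1 H -> maximal M2 H -> M1 :&: M2 = 1 -> abelian H.
Proof.
move=> pH maxM1 maxM2 tiM12; apply/derG1P/trivgP.
by rewrite -tiM12 subsetI !(pgroup_maximal_der1 pH).
Qed.

Lemma TI_mulg_notin (M1 M2 : {group gT}) y z :
    M1 :&: M2 = 1 -> y \in M1 -> z \in M2 -> y != 1 -> z != 1 ->
  y * z \notin M1 /\ y * z \notin M2.
Proof.
move=> tiM12 M1y M2z nty ntz.
have tiP u : u \in M1 -> u \in M2 -> u = 1.
  by move=> M1u M2u; apply/set1gP; rewrite -tiM12 inE M1u.
rewrite groupMl // groupMr //; split.
- by apply: contra ntz => M1z; rewrite (tiP z).
- by apply: contra nty => M2y; rewrite (tiP y).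
Qed.

Lemma calD_gt2_noncyclic_pgroup (p : nat) H :
  p.-group H -> ~~ cyclic H -> 2 < calD H.
Proof.
move=> pH ncH; have [M1 [M2 [maxM1 maxM2 neM12]]] := noncyclic_two_maximal ncH.
have [pM1H pM2H] := (maxgroupp maxM1, maxgroupp maxM2).
have [nM1H nM2H] := (p_maximal_normal pH maxM1, p_maximal_normal pH maxM2).
have ntH : H :!=: 1 by apply: contraNneq ncH => ->; apply: cyclic1.
have [p_pr _ _] := pgroup_pdiv pH ntH.
have ntM M : maximal M H -> M :!=: 1.
  move=> maxM; apply: contraNneq ncH => eM1; apply: prime_cyclic.
  by rewrite -(indexg1 H) -eM1 (p_maximal_index pH maxM).
have [ntM1 ntM2] := (ntM _ maxM1, ntM _ maxM2).
have maxM_eq M M' : maximal M H -> maximal M' H -> M \subset M' -> M :=: M'.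
  by move=> maxM maxM' sMM'; case/maxgroupP: maxM => _ /(_ M' (maxgroupp maxM') sMM') ->.
have [tiM12 | ntM12] := eqVneq (M1 :&: M2) 1; last first.
  apply: (calD_gt2_normal nM1H nM2H (normalI nM1H nM2H) pM1H pM2H _ ntM1 ntM2 ntM12 neM12).
  - exact: sub_proper_trans (subsetIl _ _) pM1H.
  - by apply: contraNneq neM12 => /esym/setIidPr/(maxM_eq _ _ maxM2 maxM1)/val_inj->.
  - by apply: contraNneq neM12 => /setIidPl/(maxM_eq _ _ maxM1 maxM2)/val_inj->.
(* M1 and M2 meet trivially: H is abelian, and <[y * z]> with y, z nontrivial in M1, M2
   is a third normal subgroup. *)
have abH := pgroup_TI_maximal_abelian pH maxM1 maxM2 tiM12.
have [[y M1y nty] [z M2z ntz]] := (trivgPn _ ntM1, trivgPn _ ntM2).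
have [yzM1' yzM2'] := TI_mulg_notin tiM12 M1y M2z nty ntz.
have Hyz : y * z \in H.
  by rewrite groupM ?(subsetP (proper_sub pM1H) y) ?(subsetP (proper_sub pM2H) z).
have nyzH : <[y * z]> <| H by rewrite -(sub_abelian_normal _ abH) cycle_subG.
apply: (calD_gt2_normal nM1H nM2H nyzH pM1H pM2H _ ntM1 ntM2 _ neM12).
- rewrite properEneq cycle_subG Hyz andbT.
  by apply: contraNneq ncH => <-; apply: cycle_cyclic.
- by rewrite cycle_eq1; apply: contraNneq yzM1' => ->.
- by apply: contraNneq yzM2' => ->; apply: cycle_id.
- by apply: contraNneq yzM1' => <-; apply: cycle_id.
Qed.

End PGroups.

Section CenterAndQuotient.

Variable gT : finGroupType.
Implicit Types (A B : {set gT}) (G K : {group gT}).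

Lemma quotient_pgroup_sub_cycles (p : nat) G K :
    K <| G -> prime p -> p %| #|K| ->
    {in G, forall x, x \notin K -> K \subset <[x]>} ->
  p.-group (G / K).
Proof.
move=> nKG p_pr pK sKx.
have p'K y : y \in G -> p^'.-elt y -> y \in K.
  move=> Gy p'y; apply: contraT => Ky'.
  have /pgroupP/(_ p p_pr pK) := pgroupS (sKx y Gy Ky') p'y.
  by rewrite !inE eqxx.
apply/pgroupP=> q q_pr /(Cauchy q_pr)[_ /morphimP[y Ny Gy ->] oy].
have Kyp' : y.`_p^' \in K by rewrite p'K ?groupX ?p_elt_constt.
have : p.-elt (coset K y).
  rewrite -p_eltNK; apply/constt1P.
  by rewrite -(morph_constt (coset_morphism K)) //= coset_id.
by rewrite /p_elt oy pnatE.
Qed.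

Lemma exists_noncentral_cycle G :
    'Z(G) :!=: 1 -> 0 < calD (G / 'Z(G)) <= 2 ->
  exists2 x, x \in G :\: 'Z(G) & ~~ ('Z(G) \subset <[x]>).
Proof.
move=> ntZ /andP[D_gt0 D_le2].
have [/exists_inP // | /exists_inPn sZx] :=
  boolP [exists x in G :\: 'Z(G), ~~ ('Z(G) \subset <[x]>)].
suff: 2 < calD (G / 'Z(G)) by rewrite ltnNge D_le2.
have p_pr : prime (pdiv #|'Z(G)|) by rewrite pdiv_prime ?cardG_gt1.
apply: (@calD_gt2_noncyclic_pgroup _ (pdiv #|'Z(G)|)).
  apply: quotient_pgroup_sub_cycles (center_normal G) p_pr (pdiv_dvd _) _.
  by move=> x Gx Zx'; have := sZx x; rewrite inE Zx' Gx negbK; apply.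
apply: contraTN D_gt0 => /cyclic_center_factor_abelian/center_idP->.
by rewrite trivg_quotient calD1.
Qed.

Lemma nsn_center_not_sub G (A : {group gT}) :
  A \subset G -> A :!=: 1 -> ~~ ('Z(G) \subset A) -> gval A \in nsn_subgroups G.
Proof.
move=> sAG ntA sZA'; rewrite inE groupP sAG ntA /=.
apply: contraNneq sZA' => <-; rewrite subsetI center_sub /=.
exact: subset_trans (subsetIr G _) (subset_trans (centS sAG) (cent_sub A)).
Qed.

Lemma cosetpre_nsn G K (Yb : {set coset_of K}) :
    K <| G -> K :!=: 1 -> Yb \in nsn_subgroups (G / K) ->
  let Y := coset K @*^-1 Yb in
  [/\ Y \in nsn_subgroups G, K \subset Y & ~~ (Y \subset K)].
Proof.
move=> nKG ntK; rewrite inE => /and4P[gYb sYbGK ntYb nYb].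
have eYb : Yb = Group gYb by [].
rewrite /= eYb in sYbGK ntYb nYb *; set Y := (coset K @*^-1 Group gYb)%G.
have nKY : K <| Y := normal_cosetpre _.
have eY : Y / K = Group gYb := cosetpreK _.
split; first 1 last.
- exact: normal_sub nKY.
- by apply: contra ntYb => sYK; rewrite -subG1 -eY -(trivg_quotient K) quotientS.
rewrite inE groupP.
have -> : Y \subset G by rewrite -(quotientGK nKG) morphpreS.
have -> /= : gval Y != 1 by apply: contraNneq ntK => eY1; rewrite -subG1 -eY1 normal_sub.
apply: contra nYb => /eqP eNY.
by rewrite -eY -quotient_subnormG // eNY.
Qed.

Lemma conjugates_neq_sub G K A B :
  G \subset 'N(K) -> K \subset A -> ~~ (K \subset B) -> A :^: G != B :^: G.
Proof.
move=> nKG sKA; apply: contraNneq => eAB.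
have /imsetP[g Gg ->] : B \in A :^: G by rewrite eAB (orbit_refl 'Js).
by rewrite -(normsP nKG g Gg) conjSg.
Qed.

Lemma cosetpre_conjugates_neq G K (Yb1 Yb2 : {set coset_of K}) :
    K <| G -> Yb1 :^: (G / K) != Yb2 :^: (G / K) ->
  coset K @*^-1 Yb1 :^: G != coset K @*^-1 Yb2 :^: G.
Proof.
move=> nKG; apply: contraNneq => eY.
have /imsetP[g Gg eY2] : coset K @*^-1 Yb2 \in coset K @*^-1 Yb1 :^: G.
  by rewrite eY (orbit_refl 'Js).
apply/eqP/esym/(@orbit_eqP _ _ 'Js%act).
rewrite -(cosetpreK Yb2) eY2 quotientJ ?(subsetP (normal_norm nKG)) // cosetpreK.
by rewrite imset_f ?mem_quotient.
Qed.

Lemma calD_center_ltn G (T : {set {set {set gT}}}) :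
    'Z(G) :!=: 1 -> 'Z(G) \proper G ->
    T \subset [set Y :^: G | Y in nsn_subgroups G] ->
    {in T, forall c : {set {set gT}}, exists2 Y, Y \in c & ~~ (Y \subset 'Z(G))} ->
  calD 'Z(G) + #|T| < calD G.
Proof.
move=> ntZ pZG sTD wT; set S := 'Z(G) |: nsn_subgroups 'Z(G).
have S_P W : W \in S -> [/\ group_set W, W \subset 'Z(G) & W != 1].
  by rewrite !inE => /predU1P[-> | /and4P[]//]; rewrite groupP.
have nZW (W : {set gT}) : W \subset 'Z(G) -> W <| G.
  move=> sWZ; rewrite /normal (subset_trans sWZ (center_sub G)) cents_norm //.
  by rewrite centsC (subset_trans sWZ) ?subsetIr.
have nSG W : W \in S -> G \subset 'N(W).
  by case/S_P=> _ /nZW/normal_norm.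
have sSD W : W \in S -> W \in nsn_subgroups G.
  case/S_P=> gW sWZ ntW.
  exact: normal_nsn gW (nZW _ sWZ) (sub_proper_trans sWZ pZG) ntW.
have ZnS : gval 'Z(G) \notin nsn_subgroups 'Z(G).
  by rewrite inE (setIidPl (normG _)) eqxx !andbF.
set TZ := [set W :^: G | W in S].
have cardTZ : #|TZ| = #|S|.
  apply: card_in_imset => W1 W2 SW1 SW2.
  by rewrite !conjugates_normal ?nSG //; apply: set1_inj.
have tiTZ : TZ :&: T = set0.
  apply/setP=> c; rewrite !inE; apply/negbTE/andP=> [[/imsetP[W SW ->] /wT[Y]]].
  by rewrite conjugates_normal ?nSG // => /set1P->; case/S_P: SW => _ ->.
have sTZD : TZ :|: T \subset [set Y :^: G | Y in nsn_subgroups G].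
  by rewrite subUset sTD andbT; apply/subsetP=> _ /imsetP[W /sSD SW ->]; apply: imset_f.
have := subset_leq_card sTZD; rewrite cardsU tiTZ cards0 subn0 cardTZ.
rewrite cardsU1 ZnS add1n => le_TZ_D; apply: leq_trans le_TZ_D.
by rewrite ltnS leq_add2r leq_imset_card.
Qed.

Lemma calD_center_add3 G (Y1 Y2 Y3 : {set gT}) :
    'Z(G) :!=: 1 -> 'Z(G) \proper G ->
    Y1 \in nsn_subgroups G -> Y2 \in nsn_subgroups G -> Y3 \in nsn_subgroups G ->
    ~~ (Y1 \subset 'Z(G)) -> ~~ (Y2 \subset 'Z(G)) -> ~~ (Y3 \subset 'Z(G)) ->
    Y1 :^: G != Y2 :^: G -> Y1 :^: G != Y3 :^: G -> Y2 :^: G != Y3 :^: G ->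
  calD 'Z(G) + 3 < calD G.
Proof.
move=> ntZ pZG nsnY1 nsnY2 nsnY3 sY1Z' sY2Z' sY3Z' neY12 neY13 neY23.
set T := [set Y1 :^: G; Y2 :^: G; Y3 :^: G].
have T_P c : c \in T ->
    exists2 Y, (Y \in nsn_subgroups G) && ~~ (Y \subset 'Z(G)) & c = Y :^: G.
  by rewrite !inE => /orP[/orP[]|] /eqP->; [exists Y1 | exists Y2 | exists Y3];
    rewrite ?nsnY1 ?nsnY2 ?nsnY3.
have cardT : #|T| = 3.
  by rewrite /T setUC cardsU1 cards2 !inE negb_or !(eq_sym (Y3 :^: G)) neY12 neY13 neY23.
rewrite -cardT; apply: calD_center_ltn => // [|c /T_P[Y /andP[_ sYZ'] ->]].
  by apply/subsetP=> c /T_P[Y /andP[nsnY _] ->]; apply: imset_f.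
by exists Y => //; apply: (orbit_refl 'Js).
Qed.

End CenterAndQuotient.

Theorem mainTheorem13 (gT : finGroupType) (G : {group gT}) :
  'Z(G) != 1 -> calD (G / 'Z(G)) = 2 -> 4 <= calD G - calD 'Z(G).
Proof.
move=> ntZ DGZ; have nZG := center_normal G.
have [x /setDP[Gx Zx'] sZx'] : exists2 x, x \in G :\: 'Z(G) & ~~ ('Z(G) \subset <[x]>).
  by apply: exists_noncentral_cycle; rewrite ?DGZ.
have pZG : 'Z(G) \proper G.
  by rewrite properEneq center_sub andbT; apply: contraNneq Zx' => ->.
have /card_gt1P[_ [_ [/imsetP[Yb1 nsnYb1 ->] /imsetP[Yb2 nsnYb2 ->] neYb12]]] :
  1 < calD (G / 'Z(G)) by rewrite DGZ.
have [nsnY1 sZY1 sY1Z'] := cosetpre_nsn nZG ntZ nsnYb1.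
have [nsnY2 sZY2 sY2Z'] := cosetpre_nsn nZG ntZ nsnYb2.
have nsnX : gval <[x]> \in nsn_subgroups G.
  by rewrite nsn_center_not_sub ?cycle_subG ?cycle_eq1 //; apply: contraNneq Zx' => ->.
rewrite leq_psubRL // addnS.
apply: (calD_center_add3 ntZ pZG nsnY1 nsnY2 nsnX sY1Z' sY2Z').
- by rewrite cycle_subG.
- exact: cosetpre_conjugates_neq nZG neYb12.
- exact: conjugates_neq_sub (normal_norm nZG) sZY1 sZx'.
- exact: conjugates_neq_sub (normal_norm nZG) sZY2 sZx'.
Qed.
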